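(* A monomial $f\in k[x_0, \dots, x_{n+1}]$ is in $I_{B_n}^{(m)}$ if and only if \[ \min\{w_{0,S}(f), w_{n+1,S}(f)\}\geq m \quad \text{for all subtrees } S \text{ of } Q_n \text{ with } n-2 \text{ vertices}. \]
   Context: Let $k$ be a field. Let $Q_n$ be an $n$-gon in $\mathbb{R}^2$ with vertices labeled $1,\dots,n$, containing the origin and embedded in $\mathbb{R}^3$, and let $B_n=\mathrm{conv}(Q_n,(0,0,1),(0,0,-1))$ be the bipyramid over $Q_n$, whose two extra vertices $(0,0,1)$ and $(0,0,-1)$ are labeled $0$ and $n+1$. Regard $B_n$ as a simplicial complex on vertices $\{0,1,\dots,n+1\}$ and let $I_{B_n}\subset k[x_0,\dots,x_{n+1}]$ be its Stanley-Reisner ideal, i.e. the ideal generated by the squarefree monomials $\prod_{i\in\tau}x_i$ with $\tau$ a non-face of $B_n$. For a homogeneous ideal $I$, the $m$-th symbolic power is $I^{(m)}=R\cap\bigcap_{P\in \mathrm{Ass}(I)} I^mR_P$. For a subtree $S$ of the $n$-gon $Q_n$ having $n-2$ vertices and a monomial $f=x_0^{a_0}x_1^{a_1}\cdots x_{n+1}^{a_{n+1}}$, define the weights $w_{0,S}(f)=\sum_{i\in S}a_i+a_0$ and $w_{n+1,S}(f)=\sum_{i\in S}a_i+a_{n+1}$ (sums over the vertices of $S$). *)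

From HB Require Import structures.
From mathcomp Require Import all_boot all_order all_algebra.
From mathcomp Require Import mpoly.

Set Implicit Arguments.
Unset Strict Implicit.
Unset Printing Implicit Defensive.

Import Order.TTheory GRing.Theory.
Local Open Scope ring_scope.

Section Ideals.
Variable R : comNzRingType.

Definition ideal_gen (G : R -> Prop) (f : R) : Prop :=
  exists s : seq (R * R), (forall p, p \in s -> G p.2) /\
                          f = \sum_(p <- s) p.1 * p.2.

Definition ideal_pow (I : R -> Prop) (m : nat) : R -> Prop :=
  ideal_gen (fun g => exists s : seq R,
     [/\ size s = m, (forall x, x \in s -> I x) & g = \prod_(x <- s) x]).

Definition is_ideal (P : R -> Prop) : Prop :=
  [/\ P 0, (forall x y, P x -> P y -> P (x + y)) & (forall r x, P x -> P (r * x))].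

Definition is_prime_ideal (P : R -> Prop) : Prop :=
  [/\ is_ideal P, ~ P 1 & (forall x y, P (x * y) -> P x \/ P y)].

Definition associated_prime (I P : R -> Prop) : Prop :=
  is_prime_ideal P /\ exists g : R, forall h, P h <-> I (h * g).

(* m-th symbolic power  I^(m) = R \cap \bigcap_{P in Ass(I)} I^m R_P.
   Since R is a domain in our application, f/1 \in I^m R_P iff
   s f \in I^m for some s \notin P; we write this out elementwise. *)
Definition symbolic_power (I : R -> Prop) (m : nat) (f : R) : Prop :=
  forall P, associated_prime I P -> exists s : R, ~ P s /\ ideal_pow I m (s * f).

End Ideals.

(* Polygon vertices are 1..n in cyclic order; 0 and n+1 are the apices. *)
Definition polyV (n : nat) (i : 'I_n.+2) : bool := (0 < i <= n)%N.

Definition polyadj (n : nat) (i j : 'I_n.+2) : bool :=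
  [&& polyV i, polyV j &
      [|| (j : nat) == i.+1, (i : nat) == j.+1,
          ((i : nat) == 1%N) && ((j : nat) == n) |
          ((i : nat) == n) && ((j : nat) == 1%N)]].

Definition bipyr_face (n : nat) (t : {set 'I_n.+2}) : bool :=
  [exists i, exists j, polyadj i j &&
     ((t \subset [set ord0; i; j]) || (t \subset [set ord_max; i; j]))].

Definition SR_bipyr (k : fieldType) (n : nat) : {mpoly k[n.+2]} -> Prop :=
  ideal_gen (fun g => exists t : {set 'I_n.+2},
                ~~ bipyr_face t /\ g = \prod_(i in t) 'X_i).

Definition is_subtree (n : nat) (S : {set 'I_n.+2})
    (E : {set {set 'I_n.+2}}) : Prop :=
  [/\ {subset S <= polyV (n:=n)},
      (forall e, e \in E -> exists i j, [/\ polyadj i j, i \in S, j \in S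
                                          & e = [set i; j]]),
      (forall x y, x \in S -> y \in S ->
         connect (fun u v => [set u; v] \in E) x y),
      S != set0 &
      #|E|.+1 = #|S| ].

Definition w0 (n : nat) (S : {set 'I_n.+2}) (a : 'X_{1.. n.+2}) : nat :=
  (\sum_(i in S) a i + a ord0)%N.
Definition wn1 (n : nat) (S : {set 'I_n.+2}) (a : 'X_{1.. n.+2}) : nat :=
  (\sum_(i in S) a i + a ord_max)%N.

Arguments SR_bipyr : clear implicits.
Arguments is_subtree : clear implicits.

(* A monomial ideal contains a polynomial iff it contains each of its monomials, so the
   Stanley-Reisner ideal I of a simplicial complex consists of the polynomials all of whose
   monomials have non-face support. Its associated primes are the ideals P_F generated by the
   variables outside a facet F. Since every non-face meets the complement of F, each element
   of I^m has all monomials of degree >= m in those variables; conversely, if x^a has such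
   degree >= m then x^(mF) x^a is a monomial multiple of m generators x^(F + v), v not in F.
   Hence x^a lies in I^(m) iff m <= sum_(i not in F) a_i for every facet F.
   The facets of the bipyramid are the triangles {apex, i, j} over the edges ij of Q_n; the
   complement of such a triangle is the other apex together with the path Q_n - {i, j}, a
   subtree with n - 2 vertices, and every subtree with n - 2 vertices arises this way because
   it misses exactly the two ends of one edge of Q_n. *)

From HB Require Import structures.
From mathcomp Require Import all_boot all_order all_algebra.
From mathcomp Require Import mpoly.
From mathcomp Require Import zify ring.
From Stdlib Require Import ClassicalEpsilon.

Set Implicit Arguments.
Unset Strict Implicit.
Unset Printing Implicit Defensive.
Import Order.TTheory GRing.Theory.
Local Open Scope ring_scope.

(** * Monomial ideals *)

Section IdealGen.
Variable R : comNzRingType.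
Implicit Types (G : R -> Prop) (p q r : R).

Lemma ideal_gen0 G : ideal_gen G 0.
Proof. by exists [::]; rewrite big_nil. Qed.

Lemma ideal_genD G p q : ideal_gen G p -> ideal_gen G q -> ideal_gen G (p + q).
Proof.
move=> [s [hs ->]] [s' [hs' ->]]; exists (s ++ s'); rewrite big_cat; split=> //.
by move=> x; rewrite mem_cat => /orP[/hs|/hs'].
Qed.

Lemma ideal_genMl G r p : ideal_gen G p -> ideal_gen G (r * p).
Proof.
move=> [s [hs ->]]; exists [seq (r * x.1, x.2) | x <- s]; split.
  by move=> x /mapP[y /hs hy ->].
by rewrite big_map mulr_sumr; apply: eq_bigr => x _; rewrite mulrA.
Qed.

Lemma ideal_gen_mem G g : G g -> ideal_gen G g.
Proof.
move=> hg; exists [:: (1, g)]; rewrite big_seq1 mul1r.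
by split=> // x; rewrite inE => /eqP ->.
Qed.

End IdealGen.

Section Monomials.
Variable N : nat.
Implicit Types (t C : {set 'I_N}) (b c : 'X_{1..N}).

Definition mnm_supp b : {set 'I_N} := [set i | (0 < b i)%N].
Definition mnm_ind t : 'X_{1..N} := (\sum_(i in t) U_(i))%MM.
Definition mweight C b : nat := \sum_(i in C) b i.

Lemma mnm_indE t j : mnm_ind t j = (j \in t).
Proof.
rewrite /mnm_ind mnm_sumE (eq_bigr (fun i => nat_of_bool (i == j))); last first.
  by move=> i _; rewrite mnm1E.
case: (boolP (j \in t)) => jt; last first.
  by rewrite big1 // => i it; case: eqP => // ij; move: jt; rewrite -ij it.
by rewrite (bigD1 j) //= eqxx big1 ?addn0 // => i /andP[_ /negbTE ->].
Qed.

Lemma mnm_supp_ind t : mnm_supp (mnm_ind t) = t.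
Proof. by apply/setP=> j; rewrite inE mnm_indE; case: (j \in t). Qed.

Lemma mnm_suppD b c : mnm_supp (b + c)%MM = mnm_supp b :|: mnm_supp c.
Proof. by apply/setP=> j; rewrite !inE mnmDE addn_gt0. Qed.

Lemma mnm_supp1 i : mnm_supp U_(i) = [set i].
Proof. by apply/setP=> x; rewrite !inE mnm1E eq_sym; case: eqP. Qed.

Lemma mnm_ind_supp_le b : (mnm_ind (mnm_supp b) <= b)%MM.
Proof. by apply/mnm_lepP=> i; rewrite mnm_indE inE; case: (b i). Qed.

Lemma mnm_indU1 t v : v \notin t -> mnm_ind (v |: t) = (mnm_ind t + U_(v))%MM.
Proof.
move=> vt; apply/mnmP => i; rewrite mnmDE !mnm_indE mnm1E in_setU1.
by case: (eqVneq i v) => [->|_]; rewrite ?(negbTE vt) ?addn0.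
Qed.

Lemma mweightD C b c : mweight C (b + c)%MM = (mweight C b + mweight C c)%N.
Proof. by rewrite /mweight -big_split; apply: eq_bigr => i _; rewrite mnmDE. Qed.

Lemma mweight1 C v : v \in C -> mweight C U_(v) = 1%N.
Proof.
move=> vC; rewrite /mweight (bigD1 v) //= mnm1E eqxx big1 // => i /andP[_ iv].
by rewrite mnm1E eq_sym (negbTE iv).
Qed.

Lemma leq_mweight C b i : i \in C -> (b i <= mweight C b)%N.
Proof. by move=> iC; rewrite /mweight (bigD1 i) //= leq_addr. Qed.

Lemma mweight_eq0 C b : (mweight C b == 0%N) = [forall i in C, b i == 0%N].
Proof. by rewrite /mweight sum_nat_eq0. Qed.

Lemma mweight_gt0 C b : (0 < mweight C b)%N -> exists2 v, v \in C & (0 < b v)%N.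
Proof.
rewrite lt0n mweight_eq0 => /forallPn[v]; rewrite negb_imply -lt0n => /andP[].
by exists v.
Qed.

Lemma mweightU1 t z b : z \notin t ->
  mweight (z |: t) b = (\sum_(i in t) b i + b z)%N.
Proof. by move=> zt; rewrite /mweight big_setU1 //= addnC. Qed.

End Monomials.

Section MonomialIdeals.
Variables (k : fieldType) (N : nat).
Notation mpoly := {mpoly k[N]}.
Implicit Types (p q : mpoly) (t C : {set 'I_N}) (b c : 'X_{1..N}).

Lemma prodX_mnm_ind t : \prod_(i in t) ('X_i : mpoly) = 'X_[mnm_ind t].
Proof. by rewrite mprodXE. Qed.

Lemma msuppXM p b c : c \in msupp ('X_[b] * p) -> exists2 d, d \in msupp p & c = (b + d)%MM.
Proof. by rewrite mulrC (perm_mem (msuppMX _ _)) => /mapP[d hd ->]; exists d. Qed.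

Lemma msuppXM_add p b d : d \in msupp p -> (b + d)%MM \in msupp ('X_[b] * p).
Proof. by rewrite mulrC !mcoeff_msupp mcoeffMX. Qed.

Lemma msuppM_add p q c : c \in msupp (p * q) ->
  exists b d, [/\ b \in msupp p, d \in msupp q & c = (b + d)%MM].
Proof. by move/msuppM_le/allpairsP=> [[b d] /= [hb hd ->]]; exists b, d. Qed.

Lemma ideal_gen_msupp (G : mpoly -> Prop) p :
  (forall b, b \in msupp p -> ideal_gen G 'X_[b]) -> ideal_gen G p.
Proof.
rewrite {2}(mpolyE p); elim: (msupp p) => [|b s ih] h.
  by rewrite big_nil; apply: ideal_gen0.
rewrite big_cons; apply: ideal_genD; last by apply: ih => c hc; apply: h; rewrite inE hc orbT.
by rewrite -mul_mpolyC; apply: ideal_genMl; apply: h; rewrite inE eqxx.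
Qed.

Definition mweight_ge C m p := forall b, b \in msupp p -> (m <= mweight C b)%N.

Lemma mweight_ge0 C m : mweight_ge C m 0.
Proof. by move=> b; rewrite mcoeff_msupp raddf0 eqxx. Qed.

Lemma mweight_geD C m p q : mweight_ge C m p -> mweight_ge C m q -> mweight_ge C m (p + q).
Proof. by move=> hp hq b /msuppD_le; rewrite mem_cat => /orP[/hp|/hq]. Qed.

Lemma mweight_geB C m p q : mweight_ge C m p -> mweight_ge C m q -> mweight_ge C m (p - q).
Proof. by move=> hp hq b /msuppB_le; rewrite mem_cat => /orP[/hp|/hq]. Qed.

Lemma mweight_geM C m1 m2 p q :
  mweight_ge C m1 p -> mweight_ge C m2 q -> mweight_ge C (m1 + m2) (p * q).
Proof. by move=> hp hq c /msuppM_add [b [d [/hp hb /hq hd ->]]]; rewrite mweightD leq_add. Qed.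

Lemma mweight_geMl C m r p : mweight_ge C m p -> mweight_ge C m (r * p).
Proof. by move=> hp; rewrite -[m]add0n; apply: mweight_geM => // b. Qed.

Definition mweight_part C (P : pred nat) p : mpoly :=
  \sum_(b <- msupp p | P (mweight C b)) p@_b *: 'X_[b].

Lemma msupp_mweight_part C P p b : b \in msupp (mweight_part C P p) -> P (mweight C b).
Proof.
rewrite /mweight_part; elim: (msupp p) => [|c s ih]; first by rewrite big_nil msupp0.
rewrite big_cons; case: ifP => Pc; last exact: ih.
move/msuppD_le; rewrite mem_cat => /orP[|/ih //].
by move/msuppZ_le; rewrite msuppX inE => /eqP ->.
Qed.

Lemma mweight_part_split C p :
  p = mweight_part C (pred1 0%N) p + mweight_part C (predC1 0%N) p.
Proof. by rewrite {1}(mpolyE p) (bigID (fun b => mweight C b == 0%N)). Qed.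

Lemma mweight_ge_part C p : mweight_ge C 1 (mweight_part C (predC1 0%N) p).
Proof. by move=> b /msupp_mweight_part; rewrite lt0n. Qed.

Lemma msupp_mweight_partM0 C p q c :
  c \in msupp (mweight_part C (pred1 0%N) p * mweight_part C (pred1 0%N) q) ->
  mweight C c = 0%N.
Proof.
move=> /msuppM_add [b [d [/msupp_mweight_part /eqP hb /msupp_mweight_part /eqP hd ->]]].
by rewrite mweightD hb hd.
Qed.

Lemma mweight_ge_prime C : is_prime_ideal (mweight_ge C 1).
Proof.
split.
- split; [exact: mweight_ge0 | exact: mweight_geD | exact: mweight_geMl].
- rewrite -mpolyX0 => /(_ 0%MM); rewrite msuppX inE eqxx => /(_ isT).
  by rewrite /mweight big1 // => i _; rewrite mnm0E.
- move=> p q hpq.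
  set p0 := mweight_part C (pred1 0%N) p; set p1 := mweight_part C (predC1 0%N) p.
  set q0 := mweight_part C (pred1 0%N) q; set q1 := mweight_part C (predC1 0%N) q.
  have ep : p = p0 + p1 := mweight_part_split C p.
  have eq : q = q0 + q1 := mweight_part_split C q.
  (* p0 q0 lies in the ideal, yet all its monomials have weight zero. *)
  have e : p0 * q0 = p * q - (p0 * q1 + p1 * q) by rewrite ep eq; ring.
  have J : mweight_ge C 1 (p0 * q0).
    rewrite e; apply: mweight_geB => //; apply: mweight_geD; last rewrite mulrC;
      by apply: mweight_geMl; apply: mweight_ge_part.
  have : p0 * q0 = 0.
    apply: msuppnil0; case E: (msupp _) => [|b s] //.
    have hb : b \in msupp (p0 * q0) by rewrite E mem_head.
    by have := J b hb; rewrite (msupp_mweight_partM0 hb).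
  move/eqP; rewrite mulf_eq0 => /orP[] /eqP h0; [left; rewrite ep | right; rewrite eq];
    by rewrite h0 add0r; apply: mweight_ge_part.
Qed.

End MonomialIdeals.

(** * Symbolic powers of Stanley-Reisner ideals *)

Section StanleyReisner.
Variables (k : fieldType) (N : nat).
Notation mpoly := {mpoly k[N]}.
Variable face : {set 'I_N} -> bool.
Hypothesis face_down : forall t t' : {set 'I_N}, face t -> t' \subset t -> face t'.
Implicit Types (p q : mpoly) (t F : {set 'I_N}) (b c : 'X_{1..N}).

Definition SR_ideal : mpoly -> Prop :=
  ideal_gen (fun g => exists t, ~~ face t /\ g = \prod_(i in t) 'X_i).

Definition is_facet F := face F /\ forall v, v \notin F -> ~~ face (v |: F).

Lemma nonface_up (t t' : {set 'I_N}) : ~~ face t -> t \subset t' -> ~~ face t'.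
Proof. by move=> nf sub; apply: contra nf => hf; apply: face_down hf sub. Qed.

Lemma SR_idealP p : SR_ideal p <-> all (fun b => ~~ face (mnm_supp b)) (msupp p).
Proof.
split=> [[s [hs ->]] | /allP h].
  apply/allP; elim: s hs => [|[r g] s ih] hs b; first by rewrite big_nil msupp0.
  rewrite big_cons => /msuppD_le; rewrite mem_cat => /orP[|]; last first.
    by apply: ih => x hx; apply: hs; rewrite inE hx orbT.
  have [t [nft ->]] := hs (r, g) (mem_head _ _).
  rewrite prodX_mnm_ind => /msuppM_add [b1 [b2 [_]]]; rewrite msuppX inE => /eqP -> ->.
  by apply: nonface_up nft _; rewrite mnm_suppD mnm_supp_ind subsetUr.
apply: ideal_gen_msupp => b /h nf.
rewrite -(submK (mnm_ind_supp_le b)) mpolyXD; apply/ideal_genMl/ideal_gen_mem.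
by exists (mnm_supp b); rewrite prodX_mnm_ind.
Qed.

Section Transversal.
Variable C : {set 'I_N}.
Hypothesis C_meets_nonfaces : forall t, ~~ face t -> exists2 i, i \in t & i \in C.

Lemma SR_ideal_mweight_ge p : SR_ideal p -> mweight_ge C 1 p.
Proof.
move/SR_idealP/allP => hK b /hK /C_meets_nonfaces [i]; rewrite inE => hi iC.
exact: leq_trans hi (leq_mweight _ iC).
Qed.

Lemma SR_ideal_pow_mweight_ge m p : ideal_pow SR_ideal m p -> mweight_ge C m p.
Proof.
move=> [s [hs ->]] {p}; elim: s hs => [|[r g] s ih] hs.
  by rewrite big_nil; apply: mweight_ge0.
rewrite big_cons; apply: mweight_geD; last by apply: ih => x hx; apply: hs; rewrite inE hx orbT.
apply: mweight_geMl; have [l [<- hl /= ->]] := hs (r, g) (mem_head _ _).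
elim: l hl => [|x l ihl] hl; first by move=> b.
rewrite big_cons /= -add1n; apply: mweight_geM.
  by apply/SR_ideal_mweight_ge/hl; rewrite mem_head.
by apply: ihl => y hy; apply: hl; rewrite inE hy orbT.
Qed.

End Transversal.

Lemma facet_compl_meets_nonfaces F : face F ->
  forall t, ~~ face t -> exists2 i, i \in t & i \in ~: F.
Proof.
move=> fF t nt; have /set0Pn[i] : t :\: F != set0.
  by rewrite setD_eq0; apply: contra nt; apply: face_down.
by rewrite !inE => /andP[iF it]; exists i; rewrite ?inE.
Qed.

(* [mweight_ge (~: F) 1] is the prime generated by the variables outside F; it is the colon ideal (I : x^F). *)
Lemma facet_associated_prime F : is_facet F -> associated_prime SR_ideal (mweight_ge (~: F) 1).
Proof.
move=> [fF hF]; split; first exact: mweight_ge_prime.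
exists 'X_[mnm_ind F] => h; rewrite mulrC; split.
- move=> hJ; apply/SR_idealP/allP => b /msuppXM [c hc ->].
  have [v] := mweight_gt0 (hJ c hc); rewrite inE => vF cv.
  apply: nonface_up (hF v vF) _; rewrite mnm_suppD mnm_supp_ind.
  by apply/subsetP=> x; rewrite !inE => /orP[/eqP ->|->]; rewrite ?cv ?orbT.
- move/SR_idealP/allP => hK c hc; rewrite lt0n; apply/negP => /eqP w0.
  have := hK _ (msuppXM_add (mnm_ind F) hc); rewrite mnm_suppD mnm_supp_ind.
  suff -> : F :|: mnm_supp c = F by rewrite fF.
  apply/setUidPl/subsetP => x; rewrite inE; apply: contraTT => xF.
  by move/eqP: w0; rewrite mweight_eq0 => /forall_inP/(_ x); rewrite inE => /(_ xF) /eqP ->.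
Qed.

Lemma prime_notin_prodX (P : mpoly -> Prop) F : is_prime_ideal P ->
  (forall v, v \in F -> ~ P 'X_v) -> forall m, ~ P 'X_[mnm_ind F *+ m].
Proof.
move=> [_ nP1 Pmul] hF m.
have nPM x y : ~ P x -> ~ P y -> ~ P (x * y) by move=> hx hy /Pmul [].
rewrite -mpolyXn -prodX_mnm_ind; elim: m => [|m ih]; first by rewrite expr0.
rewrite exprS; apply: (nPM) => //.
by apply: (big_ind (fun x => ~ P x)); [exact: nP1 | exact: nPM | exact: hF].
Qed.

(* F is the set of variables not in P; a monomial of x^F g outside the ideal has support F. *)
Lemma associated_prime_facet (P : mpoly -> Prop) : associated_prime SR_ideal P ->
  exists F, is_facet F /\ forall m, ~ P 'X_[mnm_ind F *+ m].
Proof.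
move=> [Pprime [g Pg]].
pose F := [set v | if excluded_middle_informative (P 'X_v) then false else true].
have memF v : v \in F <-> ~ P 'X_v by rewrite inE; case: excluded_middle_informative.
have nmemF v : v \notin F -> P 'X_v by rewrite inE; case: excluded_middle_informative.
have nPF := prime_notin_prodX Pprime (fun v => proj1 (memF v)).
have : ~ SR_ideal ('X_[mnm_ind F] * g).
  by move/Pg; rewrite -[mnm_ind F]mulm1n; apply: nPF.
move/SR_idealP/negP/allPn => [b /msuppXM [c hc ->]].
rewrite negbK mnm_suppD mnm_supp_ind => fFc.
have hu u : u \notin F -> ~~ face (u |: mnm_supp c).
  move=> /nmemF /Pg /SR_idealP/allP hK.
  by have := hK _ (msuppXM_add U_(u) hc); rewrite mnm_suppD mnm_supp1.
have cF : mnm_supp c \subset F.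
  apply/subsetP => u uc; apply/negPn/negP => /hu; rewrite (face_down fFc) //.
  by rewrite subUset sub1set in_setU uc orbT subsetUr.
exists F; split=> //; split; first by apply: face_down fFc (subsetUl _ _).
by move=> v /hu /nonface_up; apply; apply: setUS.
Qed.

(* Each unit of weight outside F pairs a variable x_v, v not in F, with x^F into the
   generator x^(F + v) of the ideal. *)
Lemma facet_monomial_factor F m a : (forall v, v \notin F -> ~~ face (v |: F)) ->
  (m <= mweight (~: F) a)%N ->
  exists r (s : seq mpoly), [/\ size s = m, forall x, x \in s -> SR_ideal x &
    'X_[mnm_ind F *+ m] * 'X_[a] = 'X_[r] * \prod_(x <- s) x].
Proof.
move=> hF; elim: m a => [|m ih] a ha.
  by exists a, [::]; rewrite big_nil mulm0n mpolyX0 mul1r mulr1.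
have [v vF av] := mweight_gt0 (leq_trans (ltn0Sn m) ha).
have ea : a = ((a - U_(v)) + U_(v))%MM.
  by rewrite submK //; apply/mnm_lepP => i; rewrite mnm1E; case: eqP => [<-|].
have ha' : (m <= mweight (~: F) (a - U_(v)))%N.
  by move: ha; rewrite {1}ea mweightD mweight1 // addn1 ltnS.
have [r [s [hs hI he]]] := ih _ ha'.
have vF' : v \notin F by move: vF; rewrite inE.
exists r, ('X_[mnm_ind (v |: F)] :: s); split; first by rewrite /= hs.
  move=> x; rewrite inE => /orP[/eqP ->|/hI //].
  by apply: ideal_gen_mem; exists (v |: F); rewrite prodX_mnm_ind; split=> //; apply: hF.
rewrite big_cons mulrCA -he {1}ea mulmS (mnm_indU1 vF') !mpolyXD; ring.
Qed.

Lemma SR_ideal_pow_facet F m a : is_facet F -> (m <= mweight (~: F) a)%N ->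
  ideal_pow SR_ideal m ('X_[mnm_ind F *+ m] * 'X_[a]).
Proof.
move=> [_ hF] /(facet_monomial_factor hF) [r [s [hs hI ->]]].
exists [:: ('X_[r], \prod_(x <- s) x)]; rewrite big_seq1; split=> // x.
by rewrite inE => /eqP -> /=; exists s.
Qed.

Lemma symbolic_power_SR_monomialP m a :
  symbolic_power SR_ideal m ('X_[a] : mpoly) <->
  forall F, is_facet F -> (m <= mweight (~: F) a)%N.
Proof.
split=> [H F hF | H P /associated_prime_facet [F [hF nP]]]; last first.
  by exists 'X_[mnm_ind F *+ m]; split; [exact: nP | apply: SR_ideal_pow_facet; auto].
have [s [ns hs]] := H _ (facet_associated_prime hF).
have hJ := SR_ideal_pow_mweight_ge (facet_compl_meets_nonfaces hF.1) hs.
have /allPn [b hb] : ~~ all (fun b => 1 <= mweight (~: F) b)%N (msupp s).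
  by apply/negP => /allP.
rewrite -ltnNge ltnS leqn0 => /eqP wb.
by move: hJ; rewrite mulrC => /(_ _ (msuppXM_add a hb)); rewrite mweightD wb addn0.
Qed.

End StanleyReisner.

Lemma setC_triangle (T : finType) (P S : {set T}) x x' i j :
  S \subset P -> P :\: S = [set i; j] -> ~: P = [set x; x'] -> x != x' ->
  ~: [set x; i; j] = x' |: S.
Proof.
move=> SP PS cP xx'; apply/setP => v.
have /setP/(_ v) := PS; have /setP/(_ v) := cP; have := subsetP SP v.
rewrite !inE -orbA; case: (v \in S) => [/(_ isT) -> | _] /=.
  by move=> /esym/norP[/negbTE -> _] /esym ->; rewrite orbT.
rewrite orbF; case: (v \in P) => /= /esym hx /esym ->.
  by case/norP: hx => _ /negbTE ->; rewrite orbT.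
by rewrite orbF; case: eqP hx => [-> _|//]; rewrite (negbTE xx').
Qed.

Lemma card_set3_le (T : finType) (x y z : T) : (#|[set x; y; z]| <= 3)%N.
Proof. by rewrite -setUA cardsU1 cards2; case: (x \in _); case: (y != z). Qed.

(** * The bipyramid *)

Local Close Scope ring_scope.

(* For k < n - 2, the vertices [cyc_vertex n y k] run through the path of the n-gon from y + 1 to x - 1 that avoids the edge {x, y}. *)
Definition cyc_vertex (n y k : nat) : nat :=
  if y + k + 1 <= n then y + k + 1 else y + k + 1 - n.

Section CyclicPath.
Variables (n x y : nat).
Hypotheses (hn : 3 <= n) (hx : 0 < x <= n) (hxy : (y = x.+1 /\ x < n) \/ (x = n /\ y = 1)).

Lemma cyc_vertex_range k : k < n - 2 -> 0 < cyc_vertex n y k <= n.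
Proof. rewrite /cyc_vertex; case: ifP; lia. Qed.

Lemma cyc_vertex_avoid k : k < n - 2 -> cyc_vertex n y k <> x /\ cyc_vertex n y k <> y.
Proof. rewrite /cyc_vertex; case: ifP; lia. Qed.

Lemma cyc_vertex_inj k l : k < n - 2 -> l < n - 2 -> cyc_vertex n y k = cyc_vertex n y l -> k = l.
Proof. rewrite /cyc_vertex; case: ifP; case: ifP; lia. Qed.

Lemma cyc_vertexS k : k.+1 < n - 2 ->
  cyc_vertex n y k.+1 = (cyc_vertex n y k).+1 \/ (cyc_vertex n y k = n /\ cyc_vertex n y k.+1 = 1).
Proof. rewrite /cyc_vertex; case: ifP; case: ifP; lia. Qed.

End CyclicPath.

Section Bipyramid.
Variable n : nat.
Hypothesis hn : 3 <= n.
Implicit Types (t F S : {set 'I_n.+2}) (E : {set {set 'I_n.+2}}) (i j u v x : 'I_n.+2).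

Definition polygon := [set v : 'I_n.+2 | polyV v].

Lemma ord0_neq_max : ord0 != ord_max :> 'I_n.+2.
Proof. by apply/eqP => /(congr1 val). Qed.

Lemma setC_polygon : ~: polygon = [set ord0; ord_max].
Proof.
apply/setP => v; rewrite !inE /polyV -!val_eqE /=.
have := ltn_ord v; case: (posnP v) => [-> // | _ lt_v] /=.
case: leqP => vn /=; last by rewrite (_ : (v : nat) = n.+1) ?eqxx //; lia.
by apply/esym/negbTE/eqP; lia.
Qed.

Lemma apexP x : ~~ polyV x -> x = ord0 \/ x = ord_max.
Proof.
move=> px; have : x \in ~: polygon by rewrite inE inE.
by rewrite setC_polygon !inE => /orP[] /eqP; [left | right].
Qed.

Lemma card_polygon : #|polygon| = n.
Proof.
have := cardsC polygon; rewrite setC_polygon cards2 ord0_neq_max card_ord addn2.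
by case.
Qed.

Lemma bipyr_face_down t t' : bipyr_face t -> t' \subset t -> bipyr_face t'.
Proof.
move=> /existsP[i /existsP[j /andP[adj hor]]] sub.
apply/existsP; exists i; apply/existsP; exists j; rewrite adj /=.
by case/orP: hor => h; rewrite (subset_trans sub h) ?orbT.
Qed.

Lemma bipyr_face_card t : bipyr_face t -> #|t| <= 3.
Proof.
move=> /existsP[i /existsP[j /andP[_ /orP[]]]] /subset_leq_card h;
  exact: leq_trans h (card_set3_le _ _ _).
Qed.

Lemma polyadj_sym i j : polyadj i j = polyadj j i.
Proof.
rewrite /polyadj andbCA; congr (_ && (_ && _)); rewrite orbCA; congr (_ || (_ || _)).
by rewrite orbC andbC [X in _ || X]andbC.
Qed.

Lemma polyadj_nat i j : polyadj i j ->
  [/\ 0 < i, i <= n, 0 < j, j <= n &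
    [\/ (j : nat) = i.+1, (i : nat) = j.+1, (i : nat) = 1 /\ (j : nat) = n |
        (i : nat) = n /\ (j : nat) = 1]].
Proof.
rewrite /polyadj /polyV => /and3P[/andP[i0 iN] /andP[j0 jN] h]; split=> //.
by case/or4P: h => [/eqP|/eqP|/andP[/eqP ? /eqP ?]|/andP[/eqP ? /eqP ?]];
  [constructor 1|constructor 2|constructor 3|constructor 4].
Qed.

Lemma polyadj_polyV i j : polyadj i j -> polyV i /\ polyV j.
Proof. by case/and3P. Qed.

Lemma polyadj_neq i j : polyadj i j -> i != j.
Proof. by move=> /polyadj_nat [_ _ _ _ h]; apply/eqP => eij; subst j; case: h; lia. Qed.

Lemma bipyr_triangle_facet x i j : ~~ polyV x -> polyadj i j ->
  is_facet (@bipyr_face n) [set x; i; j].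
Proof.
move=> px adj; split.
  apply/existsP; exists i; apply/existsP; exists j; rewrite adj /=.
  by case: (apexP px) => ->; rewrite subxx ?orbT.
have [pi pj] := polyadj_polyV adj.
have c3 : #|[set x; i; j]| = 3.
  have xi : x != i by apply: contraNneq px => ->.
  have xj : x != j by apply: contraNneq px => ->.
  by rewrite -setUA cardsU1 cards2 (polyadj_neq adj) !inE (negbTE xi) (negbTE xj).
by move=> v vF; apply/negP => /bipyr_face_card; rewrite cardsU1 vF c3.
Qed.

Lemma bipyr_facet_triangle F : is_facet (@bipyr_face n) F ->
  exists x i j, [/\ ~~ polyV x, polyadj i j & F = [set x; i; j]].
Proof.
move=> [/existsP[i /existsP[j /andP[adj hor]]] hmax].
suff key x : ~~ polyV x -> F \subset [set x; i; j] -> F = [set x; i; j].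
  have p0 : ~~ polyV (ord0 : 'I_n.+2) by [].
  have pM : ~~ polyV (ord_max : 'I_n.+2) by rewrite /polyV /= ltnn.
  by case/orP: hor => sub; [exists ord0 | exists ord_max]; exists i, j; split=> //; exact: key.
move=> px sub; apply/eqP; rewrite eqEsubset sub /=.
apply/subsetP => v vG; apply/negPn/negP => vF.
have [fG _] := bipyr_triangle_facet px adj.
move: (hmax v vF); rewrite (bipyr_face_down fG) //.
by apply/subsetP => w; rewrite in_setU1 => /orP[/eqP ->|/(subsetP sub)].
Qed.

Lemma subtree_sub_polygon S E : is_subtree n S E -> S \subset polygon.
Proof. by case=> Ssub _ _ _ _; apply/subsetP => v /Ssub; rewrite inE. Qed.

Lemma subtree_edge S E u v : is_subtree n S E -> [set u; v] \in E ->
  [/\ u \in S, v \in S & polyadj u v].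
Proof.
case=> _ Eedge _ _ _ /Eedge [i [j [adj iS jS e]]].
have : u \in [set i; j] /\ v \in [set i; j] by rewrite -e !inE !eqxx orbT.
rewrite !inE => -[/orP[]/eqP eu /orP[]/eqP ev]; subst u v; split=> //;
  rewrite 1?polyadj_sym //; move: (congr1 (fun A : {set _} => #|A|) e);
  by rewrite !cards2 (polyadj_neq adj) eqxx.
Qed.

Lemma polyadj_arc_stable i j u v : polyadj u v ->
  u != i -> u != j -> v != i -> v != j -> (0 < i)%N -> (j <= n)%N ->
  ((i < u < j) = (i < v < j))%N.
Proof.
move=> /polyadj_nat [_ _ _ _ h]; rewrite -!val_eqE /=.
move=> /eqP ? /eqP ? /eqP ? /eqP ? ? ?.
by apply/idP/idP => /andP[? ?]; apply/andP; case: h => [?|?|[? ?]|[? ?]]; lia.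
Qed.

Lemma subtree_gap_polyadj S E i j : is_subtree n S E ->
  polygon :\: S = [set i; j] -> i < j -> polyadj i j.
Proof.
move=> st gap ij.
have memS v : polyV v -> v != i -> v != j -> v \in S.
  move=> pv vi vj; apply/negPn/negP => vS; move/setP/(_ v): gap.
  by rewrite !inE vS pv (negbTE vi) (negbTE vj).
have [pi pj] : polyV i /\ polyV j.
  by move/setP: gap => g; move: (g i) (g j); rewrite !inE !eqxx orbT => /andP[_ ->] /andP[_ ->].
have iS : i \notin S by move/setP/(_ i): gap; rewrite !inE eqxx => /andP[].
have jS : j \notin S by move/setP/(_ j): gap; rewrite !inE eqxx orbT => /andP[].
move: (pi) (pj); rewrite /polyV => /andP[i0 iN] /andP[j0 jN].
apply/negPn/negP => nadj.
have ji1 : (j : nat) != i.+1.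
  by apply: contraNneq nadj => e; rewrite /polyadj pi pj e eqxx.
have i1jn : ~ ((i : nat) = 1 /\ (j : nat) = n).
  by move=> [e1 e2]; move: nadj; rewrite /polyadj pi pj e1 e2 !eqxx /= !orbT.
pose x : 'I_n.+2 := inord i.+1.
pose y : 'I_n.+2 := if 1 < i then inord 1 else inord n.
have xv : (x : nat) = i.+1 by rewrite inordK //; lia.
have yv : (y : nat) = if 1 < i then 1 else n.
  by rewrite /y; case: ifP => _; rewrite inordK //; lia.
have xS : x \in S by apply: memS; rewrite -?val_eqE /= /polyV ?xv; lia.
have yS : y \in S by apply: memS; rewrite -?val_eqE /= /polyV ?yv; case: ifP; lia.
pose A := [pred v : 'I_n.+2 | i < v < j].
have clA : closed (fun u v => [set u; v] \in E) A.
  move=> u v /(subtree_edge st) [uS vS adj]; rewrite /A /=.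
  have ne w : w \in S -> (w != i) && (w != j).
    by move=> wS; apply/andP; split; apply: contraTneq wS => ->.
  have /andP[ui uj] := ne u uS; have /andP[vi vj] := ne v vS.
  exact: polyadj_arc_stable.
have [_ _ Sconn _ _] := st.
have := closed_connect clA (Sconn x y xS yS); rewrite !inE xv yv.
by case: ifP => ?; rewrite ltnSn /=; lia.
Qed.

Lemma subtree_missing_edge S E : is_subtree n S E -> #|S| = n - 2 ->
  exists i j, polyadj i j /\ polygon :\: S = [set i; j].
Proof.
move=> st cS; have SP := subtree_sub_polygon st.
have /cards2P [i [j [ij gap]]] : #|polygon :\: S| == 2.
  by rewrite cardsD (setIidPr SP) card_polygon cS; apply/eqP; lia.
case: (ltngtP i j) => h.
- by exists i, j; split=> //; apply: subtree_gap_polyadj st gap h.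
- by exists j, i; split; rewrite setUC // in gap *; apply: subtree_gap_polyadj st gap h.
- by move: ij; rewrite (val_inj h) eqxx.
Qed.

Section PathSubtree.
Variables (L : nat) (vtx : nat -> 'I_n.+2).
Hypotheses (L_gt0 : 0 < L) (vtx_inj : forall k l, k < L -> l < L -> vtx k = vtx l -> k = l).
Hypotheses (vtx_polyV : forall k, k < L -> polyV (vtx k))
  (vtx_adj : forall k, k.+1 < L -> polyadj (vtx k) (vtx k.+1)).

Definition path_vertices := [set vtx (val k) | k : 'I_L].
Definition path_edges := [set [set vtx (val k); vtx (val k).+1] | k : 'I_L.-1].

Lemma mem_path_vertices v : v \in path_vertices -> exists2 k, k < L & v = vtx k.
Proof. by move=> /imsetP[k _ ->]; exists (val k) => //; exact: ltn_ord. Qed.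

Lemma path_vertices_vtx k : k < L -> vtx k \in path_vertices.
Proof. by move=> hk; apply/imsetP; exists (Ordinal hk). Qed.

Lemma card_path_vertices : #|path_vertices| = L.
Proof.
rewrite card_imset ?card_ord // => k l /vtx_inj e.
by apply: ord_inj; apply: e; exact: ltn_ord.
Qed.

Lemma card_path_edges : #|path_edges| = L.-1.
Proof.
rewrite card_imset ?card_ord // => k l /= e; apply: ord_inj.
have hk := ltn_ord k; have hl := ltn_ord l.
have vtx_eq a b : a < L -> b < L -> (vtx a == vtx b) = (a == b).
  by move=> ha hb; apply/eqP/eqP => [|->] //; exact: vtx_inj.
have : vtx k \in [set vtx l; vtx l.+1] by rewrite -e !inE eqxx.
have : vtx l \in [set vtx k; vtx k.+1] by rewrite e !inE eqxx.
by rewrite !inE !vtx_eq; lia.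
Qed.

Lemma path_subtree : is_subtree n path_vertices path_edges.
Proof.
pose e u w := [set u; w] \in path_edges.
have conn0 k : k < L -> connect e (vtx 0) (vtx k).
  elim: k => [|k ih] hk; first exact: connect0.
  apply: connect_trans (ih _) (connect1 _); first lia.
  have hk' : k < L.-1 by lia.
  by apply/imsetP; exists (Ordinal hk').
have e_sym : connect_sym e by apply: sym_connect_sym => u w; rewrite /e setUC.
split.
- by move=> v /mem_path_vertices [k hk ->]; apply: vtx_polyV.
- move=> f /imsetP[k _ ->]; have := ltn_ord k => hk.
  by exists (vtx k), (vtx k.+1); split; rewrite ?path_vertices_vtx ?vtx_adj //; lia.
- move=> u w /mem_path_vertices[k hk ->] /mem_path_vertices[l hl ->].
  by apply: connect_trans (conn0 l hl); rewrite e_sym; exact: conn0.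
- by apply/set0Pn; exists (vtx 0); apply: path_vertices_vtx.
- by rewrite card_path_edges card_path_vertices prednK.
Qed.

End PathSubtree.

Lemma edge_compl_path (x y : 'I_n.+2) : polyV x ->
  ((y : nat) = x.+1 /\ x < n) \/ ((x : nat) = n /\ (y : nat) = 1) ->
  exists S E, [/\ is_subtree n S E, #|S| = n - 2, x \notin S & y \notin S].
Proof.
move=> hx hxy.
pose vtx (k : nat) : 'I_n.+2 := inord (cyc_vertex n y k).
have vtxE k : k < n - 2 -> (vtx k : nat) = cyc_vertex n y k.
  by move=> hk; rewrite inordK //; have := cyc_vertex_range hn hx hxy hk; lia.
have vtx_inj k l : k < n - 2 -> l < n - 2 -> vtx k = vtx l -> k = l.
  move=> hk hl e; apply: (cyc_vertex_inj hn hx hxy hk hl).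
  by rewrite -vtxE // -vtxE // e.
have vtx_polyV k : k < n - 2 -> polyV (vtx k).
  by move=> hk; have := cyc_vertex_range hn hx hxy hk; rewrite /polyV vtxE.
have vtx_adj k : k.+1 < n - 2 -> polyadj (vtx k) (vtx k.+1).
  move=> hk; have hk' : k < n - 2 by lia.
  rewrite /polyadj !vtx_polyV // !vtxE //.
  by case: (cyc_vertexS hn hx hxy hk) => [->|[-> ->]]; rewrite ?eqxx ?orbT.
have L_gt0 : 0 < n - 2 by lia.
exists (path_vertices (n - 2) vtx), (path_edges (n - 2) vtx).
split; [exact: path_subtree | exact: card_path_vertices | |];
  apply/negP => /mem_path_vertices [k hk e];
  have [] := cyc_vertex_avoid hn hx hxy hk; rewrite -vtxE // -e //.
Qed.

Lemma edge_compl_subtree i j : polyadj i j ->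
  exists S E, [/\ is_subtree n S E, #|S| = n - 2 & polygon :\: S = [set i; j]].
Proof.
move=> adj; have [_ iN _ jN h] := polyadj_nat adj; have [pi pj] := polyadj_polyV adj.
have [S [E [st cS iS jS]]] :
    exists S E, [/\ is_subtree n S E, #|S| = n - 2, i \notin S & j \notin S].
  case: h => [h|h|[h1 h2]|[h1 h2]].
  - by apply: edge_compl_path pi _; left; split; last lia.
  - have jn : j < n by lia.
    have [S [E [? ? ? ?]]] := edge_compl_path pj (or_introl (conj h jn)).
    by exists S, E.
  - have [S [E [? ? ? ?]]] := edge_compl_path pj (or_intror (conj h2 h1)).
    by exists S, E.
  - exact: edge_compl_path pi (or_intror (conj h1 h2)).
exists S, E; split=> //; apply/eqP; rewrite eq_sym eqEcard.
rewrite cards2 (polyadj_neq adj) cardsD (setIidPr (subtree_sub_polygon st)) card_polygon cS.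
by rewrite subUset !sub1set !inE iS jS pi pj /=; lia.
Qed.

Lemma polyV_apex : ~~ polyV (ord0 : 'I_n.+2) /\ ~~ polyV (ord_max : 'I_n.+2).
Proof. by rewrite /polyV /= ltnn. Qed.

Lemma mweight_apexU S a : S \subset polygon ->
  mweight (ord0 |: S) a = w0 S a /\ mweight (ord_max |: S) a = wn1 S a.
Proof.
move=> SP; have [p0 pM] := polyV_apex.
have nS x : ~~ polyV x -> x \notin S by move=> px; apply: contra px => /(subsetP SP); rewrite inE.
by rewrite !mweightU1 ?nS.
Qed.

Lemma setC_apex_triangle S i j : S \subset polygon -> polygon :\: S = [set i; j] ->
  ~: [set ord0; i; j] = ord_max |: S /\ ~: [set ord_max; i; j] = ord0 |: S.
Proof.
move=> SP gap; split; apply: setC_triangle SP gap _ _.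
- exact: setC_polygon.
- exact: ord0_neq_max.
- by rewrite setC_polygon setUC.
- by rewrite eq_sym ord0_neq_max.
Qed.

Lemma subtree_facets S E a : is_subtree n S E -> #|S| = n - 2 ->
  exists F0 F1, [/\ is_facet (@bipyr_face n) F0, is_facet (@bipyr_face n) F1,
    mweight (~: F0) a = w0 S a & mweight (~: F1) a = wn1 S a].
Proof.
move=> st cS; have [i [j [adj gap]]] := subtree_missing_edge st cS.
have SP := subtree_sub_polygon st; have [p0 pM] := polyV_apex.
have [<- <-] := mweight_apexU a SP; have [<- <-] := setC_apex_triangle SP gap.
by exists [set ord_max; i; j], [set ord0; i; j]; split; try exact: bipyr_triangle_facet.
Qed.

Lemma facet_subtree F a : is_facet (@bipyr_face n) F ->
  exists S E, [/\ is_subtree n S E, #|S| = n - 2 &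
    mweight (~: F) a = w0 S a \/ mweight (~: F) a = wn1 S a].
Proof.
move=> /bipyr_facet_triangle [x [i [j [px adj ->]]]].
have [S [E [st cS gap]]] := edge_compl_subtree adj.
have SP := subtree_sub_polygon st; have [e0 eM] := setC_apex_triangle SP gap.
exists S, E; split=> //; have [<- <-] := mweight_apexU a SP.
by case: (apexP px) => ->; [right; rewrite e0 | left; rewrite eM].
Qed.

End Bipyramid.

Theorem proposition3p6 (k : fieldType) (n : nat) (hn : (3 <= n)%N) (m : nat)
    (a : 'X_{1..n.+2}) :
  symbolic_power (SR_bipyr k n) m ('X_[a] : {mpoly k[n.+2]}) <->
  (forall (S : {set 'I_n.+2}) (E : {set {set 'I_n.+2}}),
     is_subtree n S E -> #|S| = (n - 2)%N ->
     (m <= minn (w0 S a) (wn1 S a))%N).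
Proof.
rewrite (symbolic_power_SR_monomialP _ (@bipyr_face_down n)); split.
- move=> H S E st cS; have [F0 [F1 [f0 f1 <- <-]]] := subtree_facets hn a st cS.
  by rewrite leq_min !H.
- move=> H F /(facet_subtree hn a) [S [E [st cS eF]]].
  by have := H S E st cS; rewrite leq_min => /andP[]; case: eF => ->.
Qed.
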